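(* Let $n\ge 3$ and let $B$ be a set of points in $PG(n,q)$ whose span $\langle B\rangle$ has dimension at least $3$. Suppose that every point $R\notin B$ lying on at least one secant line to $B$ lies on no tangent line to $B$. Then $|B|\geq 3q$.
   Context: A secant line to $B$ is a line meeting $B$ in at least two points. A tangent line to $B$ is a line meeting $B$ in exactly one point. *)

From HB Require Import structures.
From mathcomp Require Import all_boot all_order all_algebra all_fingroup all_field.
Set Implicit Arguments. Unset Strict Implicit. Unset Printing Implicit Defensive.
Import GRing.Theory.
Local Open Scope ring_scope.

(* PG(n,q) over a finite field F with #|F| = q: projective k-subspaces are
   (k+1)-dimensional subspaces of F^(n+1), represented canonically by their
   row-space matrix <<A>>%MS (so equality of subspaces is Leibniz equality). *)
Definition is_psub (F : fieldType) (n k : nat) (A : 'M[F]_(n.+1)) : bool :=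
  (\rank A == k.+1)%N && (<<A>>%MS == A).

Definition PGpoint (F : finFieldType) (n : nat) :=
  {A : 'M[F]_(n.+1) | is_psub 0 A}.

Definition PGline (F : finFieldType) (n : nat) :=
  {A : 'M[F]_(n.+1) | is_psub 1 A}.

Definition on_line (F : finFieldType) (n : nat) (P : PGpoint F n) (L : PGline F n) : bool :=
  (val P <= val L)%MS.

Definition meet_count (F : finFieldType) (n : nat) (B : {set PGpoint F n}) (L : PGline F n) : nat :=
  #|[set P in B | on_line P L]|.

Definition secant (F : finFieldType) (n : nat) (B : {set PGpoint F n}) (L : PGline F n) : Prop :=
  (2 <= meet_count B L)%N.

Definition tangent (F : finFieldType) (n : nat) (B : {set PGpoint F n}) (L : PGline F n) : Prop :=
  meet_count B L = 1%N.

Definition span_pdim (F : finFieldType) (n : nat) (B : {set PGpoint F n}) : nat :=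
  (\rank (\sum_(P in B) val P)%MS).-1.

From mathcomp Require Import all_boot all_order all_algebra all_fingroup all_field.
From mathcomp Require Import zify.
Set Implicit Arguments. Unset Strict Implicit. Unset Printing Implicit Defensive.
Import GRing.Theory.
Local Open Scope ring_scope.

(* Since <B> has projective dimension at least 3, B contains four
   independent points P, Q, X, Y.  Let sigma be the plane <P, Q, X>.
   (1) Every point Z of sigma outside B lies on a secant: either Z is on the
       secant PQ, or the line XZ meets PQ in a point W; if W is in B then XZ is
       a secant, otherwise W lies on the secant PQ, so by hypothesis no line
       through W is tangent, and XZ (which contains X in B) is a secant.
   (2) Hence for Z in sigma \ B the line YZ is not tangent, so it carries a
       second point f(Z) of B.  As YZ meets sigma only in Z, f(Z) lies outside
       sigma, and f is injective.  So |sigma \ B| <= |B \ sigma|, i.e.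
       |sigma| <= |B|.
   (3) A projective plane over a field with q elements has at least
       q^2 + q >= 3q points. *)

Section Points.
Variables (F : finFieldType) (n : nat).
Implicit Types (P Q R X Y Z W : PGpoint F n).

Lemma point_rank P : \rank (val P) = 1%N.
Proof. by case: P => A /= /andP[/eqP]. Qed.

Lemma point_genmx P : <<val P>>%MS = val P.
Proof. by case: P => A /= /andP[_ /eqP]. Qed.

(* Points are 1-dimensional, so inclusion of points is equality. *)
Lemma point_sub_eq P Q : (val P <= val Q)%MS -> P = Q.
Proof.
move=> sPQ; apply: val_inj; rewrite -(point_genmx P) -(point_genmx Q).
apply: eq_genmx; apply/eqmxP.
by rewrite -(eq_leqif (mxrank_leqif_eq sPQ)) !point_rank.
Qed.

Lemma join_rank P Q : P != Q -> \rank (val P + val Q)%MS = 2%N.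
Proof.
move=> neqPQ; apply/eqP; rewrite eqn_leq; apply/andP; split.
  by have := leq_of_leqif (mxrank_adds_leqif (val P) (val Q)); rewrite !point_rank.
have: (val P < val P + val Q)%MS.
  rewrite ltmxE addsmxSl addsmx_sub submx_refl /=.
  by apply: contra neqPQ => /point_sub_eq ->.
by move/rank_ltmx; rewrite point_rank.
Qed.

Lemma point_of_vec_subproof (v : 'rV[F]_n.+1) : v != 0 -> is_psub 0 <<v>>%MS.
Proof.
move=> nz_v; rewrite /is_psub genmx_id eqxx andbT mxrank_gen.
by rewrite eqn_leq rank_leq_row lt0n mxrank_eq0.
Qed.

Definition point_of_vec (v : 'rV[F]_n.+1) (nz_v : v != 0) : PGpoint F n :=
  exist _ <<v>>%MS (point_of_vec_subproof nz_v).

Lemma exists_point_sub m (A : 'M[F]_(m, n.+1)) :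
  A != 0 -> exists P, (val P <= A)%MS.
Proof.
rewrite -nz_row_eq0 => nz_A.
by exists (point_of_vec nz_A); rewrite /= genmxE nz_row_sub.
Qed.

Lemma point_vec P : exists2 v : 'rV[F]_n.+1, v != 0 & val P = <<v>>%MS.
Proof.
have nz_v : nz_row (val P) != 0 by rewrite nz_row_eq0 -mxrank_eq0 point_rank.
exists (nz_row (val P)) => //.
rewrite -{1}(point_genmx P); apply/esym/eq_genmx/eqmxP.
rewrite -(eq_leqif (mxrank_leqif_eq (nz_row_sub _))) point_rank.
by apply/eqP/anti_leq; rewrite rank_leq_row lt0n mxrank_eq0.
Qed.

Lemma join_subproof P Q : P != Q -> is_psub 1 <<(val P + val Q)%MS>>%MS.
Proof. by move=> neqPQ; rewrite /is_psub genmx_id eqxx mxrank_gen join_rank. Qed.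

Definition join P Q (neqPQ : P != Q) : PGline F n :=
  exist _ <<(val P + val Q)%MS>>%MS (join_subproof neqPQ).

Lemma on_join R P Q (neqPQ : P != Q) :
  on_line R (join neqPQ) = (val R <= val P + val Q)%MS.
Proof. by rewrite /on_line /= genmxE. Qed.

Lemma on_join_l P Q (neqPQ : P != Q) : on_line P (join neqPQ).
Proof. by rewrite on_join addsmxSl. Qed.

Lemma on_join_r P Q (neqPQ : P != Q) : on_line Q (join neqPQ).
Proof. by rewrite on_join addsmxSr. Qed.

Lemma plane_rank_le P Q X : P != Q -> (\rank (val P + val Q + val X)%MS <= 3)%N.
Proof.
move=> neqPQ; have := leq_of_leqif (mxrank_adds_leqif (val P + val Q)%MS (val X)).
by rewrite join_rank // point_rank.
Qed.

Definition points_in m (A : 'M[F]_(m, n.+1)) : {set PGpoint F n} :=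
  [set Z | (val Z <= A)%MS].

Lemma subspaces_meet (A C : 'M[F]_n.+1) :
  (\rank (A + C) < \rank A + \rank C)%N ->
  exists W, (val W <= A)%MS && (val W <= C)%MS.
Proof.
move=> rkAC; have: (A :&: C)%MS != 0.
  rewrite -mxrank_eq0 -lt0n; move: rkAC; rewrite -mxrank_sum_cap; lia.
by case/exists_point_sub => W; rewrite sub_capmx; exists W.
Qed.

Lemma line_meets_subspace (S : 'M[F]_n.+1) Y Z W :
  ~~ (val Y <= S)%MS -> (val Z <= S)%MS ->
  (val W <= val Y + val Z)%MS -> (val W <= S)%MS -> W = Z.
Proof.
move=> Y_S Z_S W_YZ W_S.
have neqYZ : Y != Z by apply: contraNneq Y_S => ->.
have rk_sum : (\rank S < \rank (val Y + val Z + S))%N.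
  rewrite rank_ltmx // ltmxE addsmxSr /=.
  by apply: contra Y_S => /(submx_trans (submx_trans (addsmxSl _ _) (addsmxSl _ _))).
have Z_cap : (val Z <= (val Y + val Z) :&: S)%MS by rewrite sub_capmx addsmxSr.
have rk_cap : (\rank ((val Y + val Z) :&: S) <= 1)%N.
  have := mxrank_sum_cap (val Y + val Z)%MS S; rewrite join_rank //; lia.
have : (val Z == (val Y + val Z) :&: S)%MS.
  by rewrite -(eq_leqif (mxrank_leqif_eq Z_cap)) point_rank eqn_leq rk_cap
       -(point_rank Z) mxrankS.
case/andP => _ cap_Z; apply: point_sub_eq; apply: submx_trans cap_Z.
by rewrite sub_capmx W_YZ.
Qed.

(* Central projection from a point Y outside S onto S is well defined: a point
   Y' != Y lies on at most one line YZ with Z in S. *)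
Lemma projection_inj (S : 'M[F]_n.+1) Y Y' Z1 Z2 :
  ~~ (val Y <= S)%MS -> Y' != Y -> (val Z1 <= S)%MS -> (val Z2 <= S)%MS ->
  (val Y' <= val Y + val Z1)%MS -> (val Y' <= val Y + val Z2)%MS -> Z1 = Z2.
Proof.
move=> Y_S neqY'Y Z1_S Z2_S Y'_YZ1 Y'_YZ2.
have neqYZ2 : Y != Z2 by apply: contraNneq Y_S => ->.
have YY'_YZ2 : (val Y + val Y' <= val Y + val Z2)%MS by rewrite addsmx_sub addsmxSl.
have : (val Y + val Y' == val Y + val Z2)%MS.
  by rewrite -(eq_leqif (mxrank_leqif_eq YY'_YZ2)) !join_rank // eq_sym.
case/andP => _ YZ2_YY'.
apply/esym/(line_meets_subspace Y_S Z1_S _ Z2_S).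
apply: submx_trans (submx_trans (addsmxSr (val Y) _) YZ2_YY') _.
by rewrite addsmx_sub addsmxSl.
Qed.

End Points.

Lemma flag_independent (K : fieldType) N (p q x : 'rV[K]_N) :
  p != 0 -> ~~ (q <= p)%MS -> ~~ (x <= p + q)%MS ->
  forall a b c : K, a *: x + b *: p + c *: q = 0 -> [/\ a = 0, b = 0 & c = 0].
Proof.
move=> nz_p q_p x_pq a b c comb0.
have a0 : a = 0.
  apply: contraNeq x_pq => nz_a.
  rewrite -[x](scalerK nz_a) scalemx_sub //.
  have -> : a *: x = - (b *: p + c *: q) by apply/eqP; rewrite -addr_eq0 addrA comb0.
  by rewrite eqmx_opp addmx_sub // scalemx_sub ?addsmxSl ?addsmxSr.
move: comb0; rewrite a0 scale0r add0r => comb0.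
have c0 : c = 0.
  apply: contraNeq q_p => nz_c.
  rewrite -[q](scalerK nz_c) scalemx_sub //.
  have -> : c *: q = - (b *: p) by apply/eqP; rewrite -addr_eq0 addrC comb0.
  by rewrite eqmx_opp scalemx_sub.
move: comb0; rewrite c0 scale0r addr0 => /eqP.
by rewrite scaler_eq0 (negbTE nz_p) orbF => /eqP.
Qed.

Lemma addrB3 (V : zmodType) (x1 x2 y1 y2 z1 z2 : V) :
  (x1 - x2) + (y1 - y2) + (z1 - z2) = (x1 + y1 + z1) - (x2 + y2 + z2).
Proof. by rewrite (addrACA x1) -opprD (addrACA (x1 + y1)) -opprD. Qed.

Lemma flag_coords_unique (K : fieldType) N (p q x : 'rV[K]_N) :
  p != 0 -> ~~ (q <= p)%MS -> ~~ (x <= p + q)%MS ->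
  forall a b c a' b' c' : K,
  a *: x + b *: p + c *: q = a' *: x + b' *: p + c' *: q -> (a, b, c) = (a', b', c').
Proof.
move=> nz_p q_p x_pq a b c a' b' c' eq_comb.
have [] := flag_independent nz_p q_p x_pq (a := a - a') (b := b - b') (c := c - c').
  by rewrite !scalerBl addrB3 eq_comb subrr.
by move=> /subr0_eq -> /subr0_eq -> /subr0_eq ->.
Qed.

Section PlaneCount.
Variables (F : finFieldType) (n : nat).

(* Homogeneous coordinates (relative to x, p, q) of q^2 + q points of the
   plane <x, p, q>: (1 : a : b) and (0 : 1 : a). *)
Definition plane_coords (s : ((F * F) + F)%type) : F * F * F :=
  match s with inl (a, b) => (1, a, b) | inr a => (0, 1, a) end.

Lemma plane_coords_proportional s t (k : F) :
  plane_coords t = (k * (plane_coords s).1.1, k * (plane_coords s).1.2,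
                    k * (plane_coords s).2) -> s = t.
Proof.
case: s => [[a b]|a]; case: t => [[a' b']|a'] /= [].
- by rewrite mulr1 => <-; rewrite !mul1r => -> ->.
- by rewrite mulr1 => <-; rewrite mul0r => /eqP; rewrite oner_eq0.
- by rewrite mulr0 => /eqP; rewrite oner_eq0.
- by rewrite mulr1 => _ <- ->; rewrite mul1r.
Qed.

Lemma card_F_ge2 : (2 <= #|F|)%N.
Proof.
have <- : #|[set (0 : F); 1]| = 2%N by rewrite cards2 eq_sym oner_neq0.
exact/subset_leq_card/subsetP.
Qed.

Lemma plane_card_ge (P Q X : PGpoint F n) :
  ~~ (val Q <= val P)%MS -> ~~ (val X <= val P + val Q)%MS ->
  (3 * #|F| <= #|points_in (val P + val Q + val X)%MS|)%N.
Proof.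
move=> Q_P X_PQ.
have [p nz_p eP] := point_vec P.
have [q nz_q eQ] := point_vec Q.
have [x nz_x eX] := point_vec X.
have q_p : ~~ (q <= p)%MS by apply: contra Q_P; rewrite eP eQ !genmxE.
have x_pq : ~~ (x <= p + q)%MS.
  apply: contra X_PQ => /submx_trans x_PQ; rewrite eX genmxE x_PQ //.
  by rewrite eP eQ addsmxS // genmxE.
pose vec s := let: (a, b, c) := plane_coords s in a *: x + b *: p + c *: q.
have nz_vec s : vec s != 0.
  apply/eqP; rewrite /vec; case: s => [[a b]|a] /= /(flag_independent nz_p q_p x_pq).
    by case=> /eqP; rewrite oner_eq0.
  by case=> _ /eqP; rewrite oner_eq0.
pose g s := point_of_vec (nz_vec s).
have g_inj : injective g.
  move=> s t /(congr1 val) /= eq_st.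
  have : (vec t <= vec s)%MS by rewrite -genmxE -eq_st genmxE.
  case/sub_rVP => k vec_t; apply: (@plane_coords_proportional s t k).
  move: vec_t; rewrite /vec; case: (plane_coords s) => [[a b] c]; case: (plane_coords t) => [[a' b'] c'].
  by rewrite !scalerDr !scalerA; apply: flag_coords_unique.
have ge3q : (3 * #|F| <= #|[set: (F * F + F)%type]|)%N.
  rewrite cardsT card_sum card_prod -[3%N]/(2 + 1)%N mulnDl mul1n leq_add2r.
  by rewrite leq_mul2r card_F_ge2 orbT.
apply: leq_trans ge3q _; rewrite -(card_imset _ g_inj); apply: subset_leq_card.
apply/subsetP => Z /imsetP [s _ ->]; rewrite inE /= genmxE /vec.
have x_S : (x <= val P + val Q + val X)%MS by rewrite -genmxE -eX addsmxSr.
have p_S : (p <= val P + val Q + val X)%MS by rewrite -genmxE -eP -addsmxA addsmxSl.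
have q_S : (q <= val P + val Q + val X)%MS.
  by rewrite -genmxE -eQ (submx_trans _ (addsmxSl _ (val X))) // addsmxSr.
by case: (plane_coords s) => [[a b] c]; rewrite !addmx_sub // scalemx_sub.
Qed.

End PlaneCount.

Section SecantGeometry.
Variables (F : finFieldType) (n : nat) (B : {set PGpoint F n}).
Implicit Types (P Q R X Y Z W : PGpoint F n) (L : PGline F n).

Lemma secant_of_two L P Q :
  P \in B -> Q \in B -> P != Q -> on_line P L -> on_line Q L -> secant B L.
Proof.
move=> PB QB neqPQ PL QL; rewrite /secant /meet_count.
have <- : #|[set P; Q]| = 2%N by rewrite cards2 neqPQ.
by apply/subset_leq_card/subsetP => R; rewrite !inE => /orP[] /eqP ->; apply/andP.
Qed.

Lemma not_tangent_secant L X :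
  X \in B -> on_line X L -> ~ tangent B L -> secant B L.
Proof.
move=> XB XL not_tan; have : (0 < meet_count B L)%N.
  by apply/card_gt0P; exists X; rewrite inE XB XL.
by rewrite /secant; move: not_tan; rewrite /tangent; case: meet_count => [|[|]].
Qed.

Lemma exists_point_outside m (A : 'M[F]_(m, n.+1)) :
  (\rank A < \rank (\sum_(P in B) val P)%MS)%N ->
  exists2 P, P \in B & ~~ (val P <= A)%MS.
Proof.
move=> rkA; apply/exists_inP; rewrite -negb_forall_in; apply: contraTN rkA.
by move=> /forall_inP sBA; rewrite -leqNgt mxrankS //; apply/sumsmx_subP.
Qed.

Definition on_secant R := exists L, secant B L /\ on_line R L.

Hypothesis no_tangent : forall R, R \notin B -> on_secant R ->
  forall L, on_line R L -> ~ tangent B L.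

Lemma secant_through L X R :
  X \in B -> R \notin B -> on_secant R -> on_line X L -> on_line R L ->
  secant B L.
Proof.
move=> XB RB R_sec XL RL; apply: (not_tangent_secant XB XL).
exact: no_tangent RB R_sec L RL.
Qed.

Lemma plane_points_on_secants P Q X Z (neqPQ : P != Q) :
  P \in B -> Q \in B -> X \in B -> ~~ (val X <= val P + val Q)%MS ->
  Z \in points_in (val P + val Q + val X)%MS -> Z \notin B -> on_secant Z.
Proof.
move=> PB QB XB X_PQ; rewrite inE => Z_S ZB.
have PQ_sec : secant B (join neqPQ).
  exact: secant_of_two PB QB neqPQ (on_join_l _) (on_join_r _).
have [Z_PQ | Z_PQ] := boolP (val Z <= val P + val Q)%MS.
  by exists (join neqPQ); rewrite on_join.
have neqXZ : X != Z by apply: contraNneq ZB => <-.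
exists (join neqXZ); split; last exact: on_join_r.
have rk_S : (\rank (val X + val Z + (val P + val Q)) <= 3)%N.
  apply: leq_trans (mxrankS (_ : _ <= val P + val Q + val X)%MS) _.
    by rewrite !addsmx_sub Z_S addsmxSr -addsmxA !addsmxSl
      (submx_trans (addsmxSl _ (val X))) // addsmxSr.
  exact: plane_rank_le.
have [W /andP [W_XZ W_PQ]] : exists W, (val W <= val X + val Z)%MS &&
                                       (val W <= val P + val Q)%MS.
  by apply: subspaces_meet; rewrite !join_rank.
have [WB | WB] := boolP (W \in B).
  have neqXW : X != W by apply: contraNneq X_PQ => ->.
  by apply: (secant_of_two XB WB neqXW); rewrite on_join ?addsmxSl.
apply: (secant_through XB WB); rewrite ?on_join ?addsmxSl //.
by exists (join neqPQ); rewrite on_join.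
Qed.

Lemma second_point Y Z :
  Y \in B -> Z \notin B -> on_secant Z -> Y != Z ->
  exists2 Y', Y' \in B & (Y' != Y) && (val Y' <= val Y + val Z)%MS.
Proof.
move=> YB ZB Z_sec neqYZ.
have := secant_through YB ZB Z_sec (on_join_l neqYZ) (on_join_r neqYZ).
rewrite /secant /meet_count (cardsD1 Y) inE YB on_join_l ltnS.
case/card_gt0P => Y'; rewrite !inE on_join => /andP [neqY'Y /andP [Y'B Y'_YZ]].
by exists Y'; rewrite ?neqY'Y.
Qed.

(* Step (2): if Y in B lies outside a subspace S all of whose points outside
   B are on secants, then projecting from Y injects the points of S outside B
   into the points of B outside S; hence S has at most |B| points. *)
Lemma subspace_card_le (S : 'M[F]_n.+1) Y :
  Y \in B -> ~~ (val Y <= S)%MS ->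
  (forall Z, Z \in points_in S :\: B -> on_secant Z) ->
  (#|points_in S| <= #|B|)%N.
Proof.
move=> YB Y_S S_sec.
pose f Z := odflt Y [pick Y' in B | (Y' != Y) && (val Y' <= val Y + val Z)%MS].
have fP Z : Z \in points_in S :\: B ->
    [/\ f Z \in B, f Z != Y & (val (f Z) <= val Y + val Z)%MS].
  move=> Z_SB; move: (Z_SB); rewrite !inE => /andP [ZB Z_S].
  have neqYZ : Y != Z by apply: contraNneq Y_S => ->.
  rewrite /f; case: pickP => [Y' /andP [-> /andP [-> ->]] // | no_pick].
  have [Y' Y'B /andP [neqY'Y Y'_YZ]] := second_point YB ZB (S_sec Z Z_SB) neqYZ.
  by move: (no_pick Y'); rewrite Y'B neqY'Y Y'_YZ.
have f_out Z : Z \in points_in S :\: B -> f Z \in B :\: points_in S.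
  move=> Z_SB; have [fZB neqfZY fZ_YZ] := fP Z Z_SB.
  move: Z_SB; rewrite !inE fZB andbT => /andP [ZB Z_S].
  by apply: contraNN ZB => fZ_S; rewrite -(line_meets_subspace Y_S Z_S fZ_YZ fZ_S).
have f_inj : {in points_in S :\: B &, injective f}.
  move=> Z1 Z2 Z1_SB Z2_SB eq_f.
  have [_ neqfY fZ1] := fP Z1 Z1_SB; have [_ _ fZ2] := fP Z2 Z2_SB.
  move: Z1_SB Z2_SB; rewrite !inE => /andP [_ Z1_S] /andP [_ Z2_S].
  by apply: (projection_inj Y_S neqfY Z1_S Z2_S fZ1); rewrite eq_f.
rewrite -(cardsID B (points_in S)) -(cardsID (points_in S) B) setIC leq_add2l.
rewrite -(card_in_imset f_inj); apply/subset_leq_card/subsetP.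
by move=> W /imsetP [Z Z_SB ->]; apply: f_out.
Qed.

End SecantGeometry.

Theorem mainTheorem15 (F : finFieldType) (n : nat) (B : {set PGpoint F n}) :
  (3 <= n)%N ->
  (3 <= span_pdim B)%N ->
  (forall R : PGpoint F n, R \notin B ->
     (exists L : PGline F n, secant B L /\ on_line R L) ->
     forall L : PGline F n, on_line R L -> ~ tangent B L) ->
  (3 * #|F| <= #|B|)%N.
Proof.
move=> _ span_ge3 no_tangent.
have rk_span : (4 <= \rank (\sum_(P in B) val P)%MS)%N.
  by move: span_ge3; rewrite /span_pdim; case: (\rank _).
have outside m (A : 'M[F]_(m, n.+1)) (rkA : (\rank A < 4)%N) :=
  exists_point_outside (leq_trans rkA rk_span).
have [P PB _] := outside _ (0 : 'M[F]_n.+1) ltac:(by rewrite mxrank0).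
have [Q QB Q_P] := outside _ (val P) ltac:(by rewrite point_rank).
have neqPQ : P != Q by apply: contraNneq Q_P => ->.
have [X XB X_PQ] := outside _ (val P + val Q)%MS ltac:(by rewrite join_rank).
have [Y YB Y_S] := outside _ _ (plane_rank_le X neqPQ).
apply: leq_trans (plane_card_ge Q_P X_PQ) _.
apply: (subspace_card_le no_tangent YB Y_S) => Z; rewrite in_setD => /andP [ZB Z_S].
exact: (plane_points_on_secants no_tangent neqPQ PB QB XB X_PQ Z_S ZB).
Qed.
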